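(* Let $k \in \mathbb{N}$, and let $a(0) \leqslant a(1)\leqslant \ldots \leqslant a(k)$ be positive integers. Let $c$ be the largest real root of the polynomial equation $x^{k+1} = \sum_{i = 0}^k a(i)x^i$. Then there exists a hereditary property of ordered graphs $\mathcal{P}$ with $|\mathcal{P}_n| = c^{(1+o(1))n}$ as $n\to\infty$.
   Context: An ordered graph of order $n$ is a graph on vertex set $[n]$ with the natural order. A hereditary property of ordered graphs is a collection of ordered graphs closed under order-preserving isomorphism and under taking induced ordered subgraphs (subgraphs induced via injective order-preserving maps preserving adjacency and non-adjacency). $\mathcal{P}_n$ denotes the set of members of $\mathcal{P}$ with vertex set $[n]$. *)

From mathcomp Require Import all_boot.
From Stdlib Require Import Reals.
Set Implicit Arguments. Unset Strict Implicit. Unset Printing Implicit Defensive.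

(* An ordered graph of order n on vertex set [n] = 'I_n is encoded by its edge
   set, each edge {i,j} with i < j stored as the pair (i, j). *)
Definition ograph n (E : {set 'I_n * 'I_n}) : bool :=
  [forall e in E, (e.1 < e.2)%N].

Definition oprop := forall n : nat, pred {set 'I_n * 'I_n}.

Definition induced m n (f : 'I_m -> 'I_n) (E : {set 'I_n * 'I_n})
  : {set 'I_m * 'I_m} :=
  [set e : 'I_m * 'I_m | (e.1 < e.2)%N && ((f e.1, f e.2) \in E)].

(* Since the only order-preserving bijection of [n] is the identity, closure
   under order-preserving isomorphism is automatic in this encoding; hereditary
   means closure under induced ordered subgraphs. *)
Definition hereditary (P : oprop) : Prop :=
  forall m n (f : 'I_m -> 'I_n),
    (forall i j : 'I_m, (i < j)%N -> (f i < f j)%N) ->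
    forall E, ograph E -> P n E -> P m (induced f E).

Definition Pn (P : oprop) (n : nat) : {set {set 'I_n * 'I_n}} :=
  [set E | ograph E && P n E].

Open Scope R_scope.

Definition charpoly_eq (k : nat) (a : nat -> nat) (x : R) : Prop :=
  x ^ (S k) = sum_f_R0 (fun i => INR (a i) * x ^ i) k.

(* A labelled graph has an initial segment of marker vertices with increasing colours in
   [1, a(k)), followed by consecutive cliques ("blocks"); a block of k+1-i vertices gets a
   colour t < a(i), and a marker is adjacent exactly to the block vertices of its colour.
   All constraints are pointwise (a smaller block only relaxes the colour bound, since a is
   nondecreasing), so these graphs form a hereditary property P.
   Recording for every block vertex its colour and the number of later vertices in its
   block turns a graph of P_n into a word: the marker colours, then a sequence of runs of
   total length m <= n.  The number f(m) of run sequences satisfies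
   f(m) = sum_i a(i) f(m - (k+1-i)), so c^(m-k-1) <= f(m) <= c^m, which bounds |P_n| by a
   constant times c^n.  When all a(k)-1 markers are present the graph determines the word,
   whence |P_n| >= c^(n-a(k)-k).  So |P_n| = c^(n + O(1)) = c^((1+o(1))n); the intermediate
   value theorem gives c >= 1, and c = 1 forces a(k) = 1 and |P_n| = 1. *)

From mathcomp Require Import all_boot zify.
From Stdlib Require Import Reals Lra Lia ClassicalEpsilon.
Set Implicit Arguments. Unset Strict Implicit. Unset Printing Implicit Defensive.

Local Open Scope nat_scope.

Lemma incr_ord_inj m n (f : 'I_m -> 'I_n) :
  (forall i j : 'I_m, i < j -> f i < f j) -> injective f.
Proof.
move=> f_incr i j fij; apply/val_inj/eqP.
by case: ltngtP => // /f_incr; rewrite fij ltnn.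
Qed.

Lemma nondecreasing_upto (k : nat) (a : nat -> nat) :
  (forall i, i.+1 <= k -> a i <= a i.+1) -> forall i j, i <= j <= k -> a i <= a j.
Proof.
move=> a_mono i j /andP [ij jk].
apply: (homo_leq_in (D := [pred x | x <= k]) leqnn leq_trans _ _ _ _ ij) => //.
- by move=> x y _; rewrite !inE => yk z /andP [_ zy]; apply: leq_trans yk; apply: ltnW.
- by move=> x _; rewrite inE; apply: a_mono.
- by rewrite inE; apply: leq_trans jk.
Qed.

Lemma ord_prefix n (P : pred 'I_n) :
  (forall i j : 'I_n, i < j -> P j -> P i) ->
  exists2 p, p <= n & forall i : 'I_n, P i = (i < p).
Proof.
move=> P_down; set p := find (predC P) (enum 'I_n).
exists p; first by rewrite -[leqRHS]size_enum_ord find_size.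
move=> i; case: ltnP => [i_lt | i_ge].
  by have := before_find i i_lt; rewrite nth_ord_enum /= => /negbFE.
have p_lt : p < n by apply: leq_ltn_trans i_ge _.
have has_notP : has (predC P) (enum 'I_n) by rewrite has_find size_enum_ord.
have p_th : nth i (enum 'I_n) p = Ordinal p_lt := nth_ord_enum i (Ordinal p_lt).
have /negbTE notP := nth_find i has_notP; rewrite -/p p_th in notP.
case: (ltngtP p i) i_ge => // [p_i _ | p_i _].
  by apply/negbTE/negP => /(P_down (Ordinal p_lt) _ p_i); rewrite notP.
by rewrite (_ : i = Ordinal p_lt) ?notP //; apply: val_inj.
Qed.

Lemma card_ord_range n l h : h <= n -> #|[set u : 'I_n | l <= u < h]| = h - l.
Proof.
move=> hn; rewrite cardsE cardE /enum_mem size_filter -enumT.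
have -> : count (mem [pred u : 'I_n | l <= u < h]) (enum 'I_n) =
          count (fun u => l <= u < h) (iota 0 n) by rewrite -val_enum_ord count_map.
suff -> : forall m, count (fun u => l <= u < h) (iota 0 m) = minn m h - minn m l by lia.
elim=> [|m IH]; first by rewrite !min0n.
rewrite -[m.+1]addn1 iotaD count_cat IH /= add0n addn0.
by case: (leqP l m); case: (ltnP m h) => /=; lia.
Qed.

Definition ordgraph n (adj : rel 'I_n) : {set 'I_n * 'I_n} :=
  [set e : 'I_n * 'I_n | (e.1 < e.2) && adj e.1 e.2].

Lemma ograph_ordgraph n (adj : rel 'I_n) : ograph (ordgraph adj).
Proof. by apply/forall_inP => e; rewrite inE => /andP []. Qed.

Lemma eq_ordgraph n (adj1 adj2 : rel 'I_n) :
  (forall i j : 'I_n, i < j -> adj1 i j = adj2 i j) -> ordgraph adj1 = ordgraph adj2.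
Proof.
by move=> eq_adj; apply/setP => -[i j]; rewrite !inE /=; case: ltnP => // /eq_adj ->.
Qed.

Lemma induced_ordgraph m n (f : 'I_m -> 'I_n) (adj : rel 'I_n) :
  (forall i j : 'I_m, i < j -> f i < f j) ->
  induced f (ordgraph adj) = ordgraph (fun i j => adj (f i) (f j)).
Proof.
by move=> f_incr; apply/setP => -[i j]; rewrite !inE /=; case: ltnP => //= /f_incr ->.
Qed.

Section RealFacts.
Local Open Scope R_scope.

Lemma INR_sum_nat (F : nat -> nat) n :
  INR (\sum_(0 <= i < n.+1) F i) = sum_f_R0 (fun i => INR (F i)) n.
Proof.
elim: n => [|n IH]; first by rewrite big_nat1.
by rewrite big_nat_recr //= plus_INR IH.
Qed.

Lemma INR_sum_seq_le (T : Type) (s : seq T) (f : T -> nat) (X : R) :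
  (forall x, INR (f x) <= X) -> INR (\sum_(x <- s) f x) <= INR (size s) * X.
Proof.
move=> f_le; elim: s => [|x s IH]; first by rewrite big_nil /=; lra.
by rewrite big_cons plus_INR (S_INR (size s)); have := f_le x; lra.
Qed.

Lemma sum_f_R0_last_le (g : nat -> R) k : (forall i, 0 <= g i) -> g k <= sum_f_R0 g k.
Proof. by move=> g_ge0; case: k => [|k] /=; [lra | have := cond_pos_sum g k g_ge0; lra]. Qed.

Lemma ln_le_compat x y : 0 < x -> x <= y -> ln x <= ln y.
Proof. by move=> x_pos [lt | ->]; [left; exact: ln_increasing | lra]. Qed.

Lemma Un_cv_div_INR (u : nat -> R) (D : R) (N : nat) :
  (forall n, (N <= n)%nat -> Rabs (u n) <= D) -> Un_cv (fun n => u n / INR n) 0.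
Proof.
move=> u_bnd e e_pos.
have [N1 N1e] := INR_archimed e D e_pos.
exists (maxn N (maxn N1 1)) => n /leP; rewrite !geq_max => /and3P [Nn N1n n_pos].
have n_gt0 : 0 < INR n by apply: lt_0_INR; apply/ltP.
have N1n' : INR N1 <= INR n by apply: le_INR; apply/leP.
have un_lt : Rabs (u n) < INR n * e.
  apply: Rle_lt_trans (u_bnd n Nn) _; apply: Rlt_le_trans N1e _.
  by apply: Rmult_le_compat_r; lra.
rewrite /Rdist Rminus_0_r Rabs_mult Rabs_inv (Rabs_pos_eq (INR n)); last lra.
have inv_pos : 0 < / INR n by apply: Rinv_0_lt_compat.
have := Rinv_r (INR n) ltac:(lra); nra.
Qed.

Lemma Rpower_asymptotics (X : nat -> R) (c K U : R) (N : nat) :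
  1 < c -> 0 < K ->
  (forall n, (N <= n)%nat -> c ^ n <= K * X n /\ X n <= U * c ^ n) ->
  exists eps : nat -> R, Un_cv eps 0 /\
    exists N', forall n, (N' <= n)%nat -> X n = Rpower c ((1 + eps n) * INR n).
Proof.
move=> c_gt1 K_pos X_bnd.
have lnc_pos : 0 < ln c by rewrite -ln_1; apply: ln_increasing; lra.
have X_pos n : (N <= n)%nat -> 0 < X n.
  by move=> /X_bnd [lo _]; have := pow_lt c n ltac:(lra); nra.
pose d n := (ln (X n) - INR n * ln c) / ln c.
have d_bnd n : (N <= n)%nat -> Rabs (d n) <= (Rabs (ln K) + Rabs (ln U)) / ln c.
  move=> Nn; have [lo hi] := X_bnd n Nn; have Xn_pos := X_pos n Nn.
  have cn_pos : 0 < c ^ n by apply: pow_lt; lra.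
  have U_pos : 0 < U by nra.
  have := ln_le_compat cn_pos lo; rewrite ln_mult // ln_pow; last lra.
  have := ln_le_compat Xn_pos hi; rewrite ln_mult // ln_pow; last lra.
  move=> ln_hi ln_lo; rewrite /d Rabs_mult Rabs_inv (Rabs_pos_eq (ln c)); last lra.
  apply: Rmult_le_compat_r; first by left; apply: Rinv_0_lt_compat.
  have := Rle_abs (ln K); have := Rle_abs (ln U).
  have := Rabs_pos (ln K); have := Rabs_pos (ln U).
  by move=> *; apply: Rabs_le; split; lra.
exists (fun n => d n / INR n); split; first exact: Un_cv_div_INR d_bnd.
exists (maxn N 1) => n; rewrite geq_max => /andP [Nn n_pos].
have n_gt0 : 0 < INR n by apply: lt_0_INR; apply/ltP.
rewrite /Rpower; have -> : (1 + d n / INR n) * INR n * ln c = ln (X n).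
  by rewrite /d; field; split; lra.
by rewrite exp_ln //; apply: X_pos.
Qed.
End RealFacts.

(** * The hereditary property *)

(* A vertex label (is_marker, colour, tag).  In a labelling the tag of a block vertex names
   its block; in a word it counts the later vertices of the same block. *)
Definition letter := (bool * nat * nat)%type.
Local Notation is_marker x := x.1.1.
Local Notation colour x := x.1.2.

Definition mark (l : nat) : letter := (true, l, 0).

Definition label_adj (x y : letter) : bool :=
  ~~ is_marker y && (if is_marker x then colour x == colour y else x.2 == y.2).

Definition label_graph n (tau : 'I_n -> letter) : {set 'I_n * 'I_n} :=
  ordgraph (fun i j => label_adj (tau i) (tau j)).

Definition block_rest n (tau : 'I_n -> letter) (i : 'I_n) : {set 'I_n} :=
  [set j : 'I_n | (i < j) && ~~ is_marker (tau j) && ((tau j).2 == (tau i).2)].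

Record labelling (k : nat) (a : nat -> nat) n (tau : 'I_n -> letter) : Prop := {
  markers_first : forall i j : 'I_n, i < j -> is_marker (tau j) -> is_marker (tau i);
  markers_increasing : forall i j : 'I_n, i < j ->
    is_marker (tau i) -> is_marker (tau j) -> colour (tau i) < colour (tau j);
  marker_colour_range : forall i, is_marker (tau i) -> 0 < colour (tau i) < a k;
  block_ids_sorted : forall i j : 'I_n, i < j ->
    ~~ is_marker (tau i) -> ~~ is_marker (tau j) -> (tau i).2 <= (tau j).2;
  block_colour_uniform : forall i j,
    ~~ is_marker (tau i) -> ~~ is_marker (tau j) -> (tau i).2 = (tau j).2 ->
    colour (tau i) = colour (tau j);
  block_rest_le : forall i, ~~ is_marker (tau i) -> #|block_rest tau i| <= k;
  block_colour_range : forall i, ~~ is_marker (tau i) ->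
    colour (tau i) < a (k - #|block_rest tau i|)
}.

Definition block_property (k : nat) (a : nat -> nat) : oprop := fun n E =>
  if excluded_middle_informative
       (exists tau : 'I_n -> letter, labelling k a tau /\ E = label_graph tau)
  then true else false.
Arguments block_property : clear implicits.

Lemma block_propertyP k a n E :
  block_property k a n E <->
  exists tau : 'I_n -> letter, labelling k a tau /\ E = label_graph tau.
Proof. by rewrite /block_property; case: excluded_middle_informative. Qed.

Lemma labelling_comp k a m n (f : 'I_m -> 'I_n) (tau : 'I_n -> letter) :
  (forall i, i.+1 <= k -> a i <= a i.+1) ->
  (forall i j : 'I_m, i < j -> f i < f j) ->
  labelling k a tau -> labelling k a (fun i => tau (f i)).
Proof.
move=> a_mono f_incr tau_ok.
have rest_le i : #|block_rest (fun i => tau (f i)) i| <= #|block_rest tau (f i)|.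
  rewrite -(card_imset _ (incr_ord_inj f_incr)); apply/subset_leq_card/subsetP.
  move=> _ /imsetP [j + ->]; rewrite !inE => /andP [/andP [ij ->] ->].
  by rewrite f_incr.
split.
- by move=> i j /f_incr; apply: (markers_first tau_ok).
- by move=> i j /f_incr; apply: (markers_increasing tau_ok).
- by move=> i; apply: (marker_colour_range tau_ok).
- by move=> i j /f_incr; apply: (block_ids_sorted tau_ok).
- by move=> i j; apply: (block_colour_uniform tau_ok).
- by move=> i /(block_rest_le tau_ok); apply: leq_trans (rest_le i).
- move=> i bi; apply: leq_trans (block_colour_range tau_ok bi) _.
  apply: nondecreasing_upto a_mono _ _ _.
  by have := rest_le i; have := block_rest_le tau_ok bi; lia.
Qed.

Lemma hereditary_block_property k a :
  (forall i, i.+1 <= k -> a i <= a i.+1) -> hereditary (block_property k a).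
Proof.
move=> a_mono m n f f_incr _ _ /block_propertyP [tau [tau_ok ->]].
apply/block_propertyP; exists (fun i => tau (f i)); split.
  exact: labelling_comp.
exact: induced_ordgraph.
Qed.

(** * Block words *)

Definition blank : letter := (false, 0, 0).

(* A block of size [k.+1 - i]; blocks of this size admit the colours [t < a i]. *)
Definition run (k i t : nat) : seq letter :=
  [seq (false, t, k - i - d) | d <- iota 0 (k.+1 - i)].

Record block_word (k : nat) (a : nat -> nat) (w : seq letter) : Prop := {
  block_letter : forall x, x \in w -> [&& ~~ is_marker x, x.2 <= k & colour x < a (k - x.2)];
  run_next : forall i, i.+1 < size w -> 0 < (nth blank w i).2 ->
    nth blank w i.+1 = (false, colour (nth blank w i), (nth blank w i).2.-1);
  run_end : forall i, i < size w -> i + (nth blank w i).2 < size w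
}.

Section BlockWords.
Variables (k : nat) (a : nat -> nat).
Hypothesis a_mono : forall j, j.+1 <= k -> a j <= a j.+1.

Lemma size_run i t : size (run k i t) = k.+1 - i.
Proof. by rewrite size_map size_iota. Qed.

Lemma nth_run i t d : d < k.+1 - i -> nth blank (run k i t) d = (false, t, k - i - d).
Proof. by move=> d_lt; rewrite (nth_map 0) ?size_iota // nth_iota. Qed.

Lemma nth_run_ahead w i d : block_word k a w -> i < size w -> d <= (nth blank w i).2 ->
  nth blank w (i + d) = (false, colour (nth blank w i), (nth blank w i).2 - d).
Proof.
move=> [letter_ok next ends] i_lt; elim: d => [|d IH] d_le.
  have /andP [+ _] := letter_ok _ (mem_nth blank i_lt).
  by rewrite addn0 subn0; case: (nth blank w i) => [[[] ?] ?].
have IHd := IH (ltnW d_le); have end_i := ends _ i_lt.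
by rewrite addnS next ?IHd ?subnS //=; lia.
Qed.

Lemma block_word_drop w s : block_word k a w -> block_word k a (drop s w).
Proof.
move=> [letter_ok next ends]; split; first by move=> x /mem_drop /letter_ok.
  by move=> i; rewrite size_drop !nth_drop addnS => ? ?; apply: next => //; lia.
by move=> i; rewrite size_drop nth_drop => ?; have := ends (s + i); lia.
Qed.

Lemma block_word_run_cat i t w :
  i <= k -> t < a i -> block_word k a w -> block_word k a (run k i t ++ w).
Proof.
move=> ik ta [letter_ok next ends]; have := size_run i t => sr.
split.
- move=> x; rewrite mem_cat => /orP [/mapP [d] | /letter_ok //].
  rewrite mem_iota => d_lt -> /=; apply/andP; split; first lia.
  by apply: leq_trans ta _; apply: nondecreasing_upto a_mono _ _ _; lia.
- move=> q; rewrite size_cat sr !nth_cat sr => q_lt.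
  case: (ltnP q.+1 (k.+1 - i)) => [q1_lt|q1_ge].
    have q_lt' := ltnW q1_lt.
    by rewrite q_lt' !nth_run //= => _; congr (_, _, _); lia.
  case: (ltnP q (k.+1 - i)) => [q_lt'|q_ge]; first by rewrite nth_run //=; lia.
  by rewrite (subSn q_ge) => pos; rewrite next //; lia.
- move=> q; rewrite size_cat sr nth_cat sr => q_lt.
  case: (ltnP q (k.+1 - i)) => [q_lt'|q_ge]; first by rewrite nth_run //=; lia.
  by have := ends (q - (k.+1 - i)); lia.
Qed.

Definition run_choices (m : nat) : seq (nat * nat) :=
  [seq (i, t) | i <- [seq i <- iota 0 k.+1 | k.+1 - i <= m], t <- iota 0 (a i)].

(* [u] is fuel: the list consists of all block words of length [m] only when [m <= u]. *)
Fixpoint enum_block_words (u m : nat) : seq (seq letter) :=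
  if u is u'.+1 then
    if m is 0 then [:: [::]] else
    [seq run k p.1 p.2 ++ w | p <- run_choices m, w <- enum_block_words u' (m - (k.+1 - p.1))]
  else [:: [::]].

Lemma run_choicesP m i t :
  reflect [/\ i <= k, k.+1 - i <= m & t < a i] ((i, t) \in run_choices m).
Proof.
apply: (iffP allpairsPdep) => [[i' [t' [+ + [-> ->]]]] | [ik im ta]].
  by rewrite mem_filter !mem_iota /= => /andP [? ?] ?; split; lia.
by exists i, t; rewrite mem_filter !mem_iota /=; split => //; apply/andP; split; lia.
Qed.

Lemma enum_block_words0 u : enum_block_words u 0 = [:: [::]].
Proof. by case: u. Qed.

Lemma enum_block_words_complete u w :
  block_word k a w -> size w <= u -> w \in enum_block_words u (size w).
Proof.
elim: u w => [|u IH] [|x w'] //= w_ok; rewrite ltnS => size_w'.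
have /and3P [] := block_letter w_ok (mem_head x w').
case: x w_ok => [[[] t] r] //= w_ok _ rk tr.
set w : seq letter := (false, t, r) :: w' in w_ok *.
have r_le : r <= size w' := run_end w_ok (i := 0) isT.
have w_take : take r.+1 w = run k (k - r) t.
  apply: (@eq_from_nth _ blank) => [|d]; first by rewrite size_takel // size_run; lia.
  rewrite size_takel // => d_lt; rewrite nth_take // nth_run; last lia.
  by rewrite (@nth_run_ahead w 0 d) //=; try congr (_, _, _); lia.
rewrite -[w](cat_take_drop r.+1) w_take.
apply/allpairsPdep; exists (k - r, t), (drop r.+1 w); split => //.
  by apply/run_choicesP; split; lia.
have -> /= : (size w').+1 - (k.+1 - (k - r)) = size (drop r.+1 w).
  by rewrite size_drop /w /=; lia.
by apply: IH; [exact: (block_word_drop r.+1 w_ok) | rewrite size_drop; lia].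
Qed.

Lemma enum_block_words_sound u m w :
  m <= u -> w \in enum_block_words u m -> block_word k a w /\ size w = m.
Proof.
elim: u m w => [|u IH] [|m] w //= m_le; try by rewrite inE => /eqP ->.
case/allpairsPdep => -[i t] [w' [/run_choicesP [ik im ta] w'_in ->]] /=.
have [w'_ok size_w'] := IH (m.+1 - (k.+1 - i)) w' ltac:(lia) w'_in.
split; first exact: block_word_run_cat.
by rewrite size_cat size_run size_w'; lia.
Qed.

Lemma head_run_cat i t w : i <= k -> head blank (run k i t ++ w) = (false, t, k - i).
Proof. by move=> ik; rewrite /run subSn //= subn0. Qed.

Lemma run_choices_uniq m : uniq (run_choices m).
Proof.
apply: allpairs_uniq_dep => [|i _|]; [exact/filter_uniq/iota_uniq | exact: iota_uniq |].
by move=> [? ?] [? ?] _ _ [-> ->].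
Qed.

Lemma enum_block_words_uniq u m : uniq (enum_block_words u m).
Proof.
elim: u m => [|u IH] [|m] //=.
apply: allpairs_uniq_dep => [|p _|]; [exact: run_choices_uniq | exact: IH |].
move=> [[i t] w] [[i' t'] w'].
case/allpairsPdep => p [v [p_in _ [Ep _]]]; subst p; case/run_choicesP: p_in => ik _ _.
case/allpairsPdep => p [v' [p_in _ [Ep _]]]; subst p; case/run_choicesP: p_in => i'k _ _.
move=> /= E.
have := congr1 (head blank) E; rewrite !head_run_cat // => -[tt' ii'].
have ii : i = i' by lia.
subst t' i'.
by move/eqP: E; rewrite eqseq_cat // => /andP [_ /eqP ->].
Qed.

Lemma size_enum_block_words u m : 0 < m ->
  size (enum_block_words u.+1 m) =
  \sum_(0 <= i < k.+1 | k.+1 - i <= m) a i * size (enum_block_words u (m - (k.+1 - i))).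
Proof.
case: m => // m _ /=.
rewrite size_allpairs_dep sumnE big_map big_allpairs_dep big_filter.
by apply: eq_bigr => i _; rewrite /= big_const_seq count_predT size_iota iter_addn_0 mulnC.
Qed.

Lemma block_word_nseq m : 0 < a k -> block_word k a (nseq m blank).
Proof.
move=> ak; split.
- by move=> x /nseqP [-> _]; rewrite /= subn0 ak.
- by move=> i _; rewrite nth_nseq if_same.
- by move=> i; rewrite nth_nseq if_same addn0.
Qed.

Lemma size_enum_block_words_gt0 u m : 0 < a k -> m <= u -> 0 < size (enum_block_words u m).
Proof.
move=> ak m_le; have := enum_block_words_complete (block_word_nseq m ak).
by rewrite size_nseq => /(_ u m_le); case: (enum_block_words u m).
Qed.
End BlockWords.

Section BlockWordsGrowth.
Local Open Scope R_scope.
Variables (k : nat) (a : nat -> nat) (c : R).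
Hypotheses (c_ge1 : 1 <= c) (c_root : charpoly_eq k a c).

Lemma size_enum_block_words_le u m :
  (m <= u)%nat -> INR (size (enum_block_words k a u m)) <= c ^ m.
Proof.
elim: u m => [|u IH] m m_le.
  by rewrite (_ : m = 0%nat) /=; [lra | lia].
have [-> | m_gt0] := posnP m; first by rewrite enum_block_words0 /=; lra.
have ck_gt0 : 0 < c ^ k.+1 by apply: pow_lt; lra.
apply: (Rmult_le_reg_l (c ^ k.+1)) => //.
have -> : c ^ k.+1 * c ^ m = sum_f_R0 (fun i => INR (a i) * c ^ i * c ^ m) k.
  by rewrite c_root Rmult_comm scal_sum.
rewrite size_enum_block_words // big_mkcond INR_sum_nat scal_sum; apply: sum_Rle => i ik.
case: ifP => [im | _]; last first.
  rewrite Rmult_0_l; apply: Rmult_le_pos; last by apply: pow_le; lra.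
  by apply: Rmult_le_pos; [exact: pos_INR | apply: pow_le; lra].
have split_pow : c ^ k.+1 * c ^ (m - (k.+1 - i)) = c ^ i * c ^ m.
  by rewrite -!pow_add; congr (c ^ _); lia.
have := IH (m - (k.+1 - i))%nat ltac:(lia); have := pos_INR (a i).
move=> a_ge0 IHm; rewrite mult_INR !Rmult_assoc -split_pow.
by apply: Rmult_le_compat_l => //; rewrite Rmult_comm; apply: Rmult_le_compat_l; lra.
Qed.

Lemma size_enum_block_words_ge u m : (0 < a k)%nat -> (m <= u)%nat ->
  c ^ m <= c ^ k.+1 * INR (size (enum_block_words k a u m)).
Proof.
move=> ak; elim: u m => [|u IH] m m_le.
  by rewrite (_ : m = 0%nat) /=; [have := pow_R1_Rle c k.+1 c_ge1; simpl; lra | lia].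
have [m_small | m_big] := ltnP m k.+1.
  have ck := pow_R1_Rle c k.+1 c_ge1.
  have size_ge1 := le_INR 1 _ (elimT leP (size_enum_block_words_gt0 ak m_le)).
  apply: Rle_trans (Rle_pow c m k.+1 c_ge1 ltac:(lia)) _.
  by rewrite -{1}(Rmult_1_r (c ^ k.+1)); apply: Rmult_le_compat_l; [lra | exact: size_ge1].
rewrite size_enum_block_words; last by lia.
have -> : c ^ m = sum_f_R0 (fun i => INR (a i) * c ^ i * c ^ (m - k.+1)) k.
  by rewrite -scal_sum -c_root -pow_add; congr (c ^ _); lia.
rewrite big_mkcond INR_sum_nat scal_sum; apply: sum_Rle => i ik.
rewrite ifT; last by apply/leP; lia.
have split_pow : c ^ i * c ^ (m - k.+1) = c ^ (m - (k.+1 - i)).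
  by rewrite -pow_add; congr (c ^ _); lia.
have := IH (m - (k.+1 - i))%nat ltac:(lia); have := pos_INR (a i).
move=> a_ge0 IHm; rewrite mult_INR !Rmult_assoc split_pow.
by apply: Rmult_le_compat_l => //; rewrite Rmult_comm.
Qed.
End BlockWordsGrowth.

(** * From labellings to words *)

Definition word_adj (w : seq letter) (i j : nat) : bool :=
  let x := nth blank w i in let y := nth blank w j in
  ~~ is_marker y && (if is_marker x then colour x == colour y else j <= i + x.2).

Definition word_graph n (w : seq letter) : {set 'I_n * 'I_n} :=
  ordgraph (fun i j : 'I_n => word_adj w i j).

Definition letter_of n (tau : 'I_n -> letter) (i : 'I_n) : letter :=
  if is_marker (tau i) then mark (colour (tau i))
  else (false, colour (tau i), #|block_rest tau i|).

Definition word_of n (tau : 'I_n -> letter) : seq letter :=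
  [seq letter_of tau i | i <- enum 'I_n].

Lemma size_word_of n (tau : 'I_n -> letter) : size (word_of tau) = n.
Proof. by rewrite size_map size_enum_ord. Qed.

Lemma nth_word_of n (tau : 'I_n -> letter) (i : 'I_n) :
  nth blank (word_of tau) i = letter_of tau i.
Proof. by rewrite (nth_map i) ?size_enum_ord // nth_ord_enum. Qed.

Lemma block_rest_bound n (tau : 'I_n -> letter) (i : 'I_n) : i + #|block_rest tau i| < n.
Proof.
have : block_rest tau i \subset [set u : 'I_n | i < u < n].
  by apply/subsetP => u; rewrite !inE => /andP [/andP [-> _] _] /=.
by move/subset_leq_card; rewrite card_ord_range //; have := ltn_ord i; lia.
Qed.

Section LabellingBlocks.
Variables (k : nat) (a : nat -> nat) (n : nat) (tau : 'I_n -> letter).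
Hypothesis tau_ok : labelling k a tau.

Lemma block_after (i j : 'I_n) : i < j -> ~~ is_marker (tau i) -> ~~ is_marker (tau j).
Proof. by move=> ij; apply: contra; apply: (markers_first tau_ok ij). Qed.

Lemma same_block (i j : 'I_n) : i < j -> ~~ is_marker (tau i) ->
  ((tau j).2 == (tau i).2) = (j <= i + #|block_rest tau i|).
Proof.
move=> ij bi.
pose P (u : 'I_n) := (u <= i) || ((tau u).2 == (tau i).2).
have P_down (u v : 'I_n) : u < v -> P v -> P u.
  rewrite /P; case: (leqP u i) => //= iu uv; have iv := ltn_trans iu uv.
  rewrite leqNgt iv /= => /eqP idv; have bu := block_after iu bi.
  have := block_ids_sorted tau_ok iu bi bu.
  have := block_ids_sorted tau_ok uv bu (block_after iv bi).
  by rewrite idv => ? ?; apply/eqP; lia.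
have [p p_le Pp] := ord_prefix P_down.
have rest_eq : block_rest tau i = [set u : 'I_n | i < u < p].
  apply/setP => u; rewrite !inE -Pp /P.
  by case: (leqP u i) => // iu; rewrite (block_after iu bi).
have ip : i < p by rewrite -Pp /P leqnn.
have := Pp j; rewrite /P leqNgt ij /= => ->.
by rewrite rest_eq card_ord_range //; apply/idP/idP; lia.
Qed.

Lemma block_rest_tail (i j : 'I_n) : ~~ is_marker (tau i) -> j \in block_rest tau i ->
  #|block_rest tau j| = i + #|block_rest tau i| - j.
Proof.
move=> bi; rewrite inE => /andP [/andP [ij bj] /eqP idj].
have -> : block_rest tau j = [set u : 'I_n | j < u < (i + #|block_rest tau i|).+1].
  apply/setP => u; rewrite !inE idj ltnS; case: (ltnP j u) => //= ju.
  by rewrite (block_after ju bj) -same_block // (ltn_trans ij ju).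
by rewrite card_ord_range; [lia | have := block_rest_bound tau i; lia].
Qed.

Lemma label_graph_word_of : label_graph tau = word_graph n (word_of tau).
Proof.
apply: eq_ordgraph => i j ij; rewrite /word_adj !nth_word_of /letter_of /label_adj.
case: ifP => bi; case: ifP => bj //=.
by rewrite eq_sym same_block ?bi.
Qed.
End LabellingBlocks.

Fixpoint bounded_lists (B p : nat) : seq (seq nat) :=
  if p is p'.+1 then [::] :: [seq x :: l | x <- iota 1 B, l <- bounded_lists B p']
  else [:: [::]].

Lemma bounded_lists_complete B p l :
  all (fun x => 0 < x <= B) l -> size l <= p -> l \in bounded_lists B p.
Proof.
elim: p l => [|p IH] [|x l] //= /andP [x_range l_range] size_l.
rewrite inE; apply/orP; right; apply: (allpairs_f (fun x0 l0 => x0 :: l0)).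
  by rewrite mem_iota; lia.
exact: IH.
Qed.

Definition candidate_words k (a : nat -> nat) n : seq (seq letter) :=
  [seq map mark l ++ w | l <- bounded_lists (a k).-1 (a k).-1,
                          w <- enum_block_words k a n (n - size l)].

Section WordOfLabelling.
Variables (k : nat) (a : nat -> nat) (n : nat) (tau : 'I_n -> letter) (p : nat).
Hypotheses (tau_ok : labelling k a tau) (p_le : p <= n).
Hypothesis markerE : forall i : 'I_n, is_marker (tau i) = (i < p).

Local Notation w := (word_of tau).

Lemma word_of_marker_letter x : x \in take p w -> x = mark (colour x).
Proof.
case/(nthP blank) => q; rewrite size_takel ?size_word_of // => qp <-.
have qn : q < n := leq_trans qp p_le.
by rewrite nth_take // (nth_word_of tau (Ordinal qn)) /letter_of markerE qp.
Qed.

Lemma take_word_of : take p w = map mark [seq colour x | x <- take p w].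
Proof. by rewrite -map_comp; apply/esym/map_id_in => x /word_of_marker_letter. Qed.

Lemma marker_colours_bounded :
  [seq colour x | x <- take p w] \in bounded_lists (a k).-1 (a k).-1.
Proof.
set l := [seq colour x | x <- take p w].
have size_l : size l = p by rewrite size_map size_takel ?size_word_of.
have nth_l q (qp : q < p) : nth 0 l q = colour (tau (Ordinal (leq_trans qp p_le))).
  rewrite (nth_map blank) ?size_takel ?size_word_of // nth_take //.
  by rewrite (nth_word_of tau (Ordinal (leq_trans qp p_le))) /letter_of markerE qp.
have l_range : all (fun x => 0 < x <= (a k).-1) l.
  apply/(all_nthP 0) => q; rewrite size_l => qp; rewrite nth_l.
  set i := Ordinal (leq_trans qp p_le).
  by have := marker_colour_range tau_ok (i := i); rewrite markerE => /(_ qp); lia.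
have l_uniq : uniq l.
  apply/(uniqP 0) => q1 q2; rewrite !inE size_l => q1p q2p; rewrite !nth_l.
  set i1 := Ordinal (leq_trans q1p p_le); set i2 := Ordinal (leq_trans q2p p_le).
  have m1 : is_marker (tau i1) by rewrite markerE.
  have m2 : is_marker (tau i2) by rewrite markerE.
  case: (ltngtP q1 q2) => // q12 E.
  - by have := markers_increasing tau_ok (i := i1) (j := i2) q12 m1 m2; rewrite E ltnn.
  - by have := markers_increasing tau_ok (i := i2) (j := i1) q12 m2 m1; rewrite E ltnn.
apply: bounded_lists_complete => //.
rewrite -(size_iota 1 (a k).-1); apply: uniq_leq_size l_uniq _ => x x_in.
by move/allP: l_range => /(_ x x_in); rewrite mem_iota; lia.
Qed.

Lemma nth_word_of_block q (qn : q < n) : p <= q ->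
  nth blank w q = (false, colour (tau (Ordinal qn)), #|block_rest tau (Ordinal qn)|).
Proof. by move=> pq; rewrite (nth_word_of tau (Ordinal qn)) /letter_of markerE ltnNge pq. Qed.

Lemma block_word_drop_markers : block_word k a (drop p w).
Proof.
have block q (qn : q < n) : p <= q -> ~~ is_marker (tau (Ordinal qn)).
  by rewrite markerE -leqNgt.
split.
- move=> x /(nthP blank) [q]; rewrite size_drop size_word_of => qs <-.
  have qn : p + q < n by lia.
  rewrite nth_drop (nth_word_of_block qn) ?leq_addr //=.
  have bq := block _ qn (leq_addr _ _).
  by rewrite (block_rest_le tau_ok bq) (block_colour_range tau_ok bq).
- move=> q; rewrite size_drop size_word_of => qs.
  have qn : p + q < n by lia.
  have q1n : p + q.+1 < n by lia.
  rewrite !nth_drop (nth_word_of_block qn) ?leq_addr // (nth_word_of_block q1n) ?leq_addr //=.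
  set i := Ordinal qn; set j := Ordinal q1n => rest_pos.
  have bi := block _ qn (leq_addr _ _); have bj := block _ q1n (leq_addr _ _).
  have ij : i < j by rewrite /= addnS.
  have same_ij : (tau j).2 == (tau i).2 by rewrite (same_block tau_ok) //= addnS; lia.
  have j_in : j \in block_rest tau i by rewrite inE ij bj.
  rewrite (block_rest_tail tau_ok bi j_in).
  rewrite (block_colour_uniform tau_ok bj bi (eqP same_ij)) /=.
  by congr (_, _, _); move: rest_pos; rewrite /i /=; lia.
- move=> q; rewrite size_drop size_word_of nth_drop => qs.
  have qn : p + q < n by lia.
  rewrite (nth_word_of_block qn) ?leq_addr //=.
  by have := block_rest_bound tau (Ordinal qn); rewrite /=; lia.
Qed.
End WordOfLabelling.

Lemma word_of_candidate k a n (tau : 'I_n -> letter) :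
  labelling k a tau -> word_of tau \in candidate_words k a n.
Proof.
move=> tau_ok; have [p p_le markerE] := ord_prefix (markers_first tau_ok).
rewrite -(cat_take_drop p (word_of tau)) (take_word_of p_le markerE).
apply: (allpairs_f_dep (fun l w => map mark l ++ w)).
  exact: marker_colours_bounded.
rewrite size_map size_takel ?size_word_of //.
have -> : n - p = size (drop p (word_of tau)) by rewrite size_drop size_word_of.
apply: enum_block_words_complete; first exact: block_word_drop_markers.
by rewrite size_drop size_word_of leq_subr.
Qed.

(** * From words to labellings *)

Lemma word_adj_of_word_graph n v1 v2 x y : word_graph n v1 = word_graph n v2 ->
  x < y -> y < n -> word_adj v1 x y = word_adj v2 x y.
Proof.
move=> E xy yn; have xn := ltn_trans xy yn.
have := congr1 (fun g : {set 'I_n * 'I_n} => (Ordinal xn, Ordinal yn) \in g) E.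
by rewrite /= !inE /= xy.
Qed.

Definition all_marks (B : nat) : seq letter := map mark (iota 1 B).

(* A block is named by the position of its last vertex. *)
Definition labelling_of_word n (v : seq letter) (i : 'I_n) : letter :=
  let x := nth blank v i in if is_marker x then x else (false, colour x, i + x.2).
Arguments labelling_of_word : clear implicits.

(* [all_marks B ++ w] has a marker of every colour in [1, B], so its graph determines [w]. *)
Section FullWords.
Variables (k : nat) (a : nat -> nat) (n : nat) (w : seq letter).
Hypotheses (a_mono : forall i, i.+1 <= k -> a i <= a i.+1) (w_ok : block_word k a w).
Hypotheses (B_le : (a k).-1 <= n) (size_w : size w = n - (a k).-1).
Local Notation B := (a k).-1.
Local Notation v := (all_marks B ++ w).

Lemma nth_full_mark q : q < B -> nth blank v q = mark q.+1.
Proof.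
move=> qB; rewrite nth_cat size_map size_iota qB.
by rewrite (nth_map 0) ?size_iota // nth_iota // add1n.
Qed.

Lemma nth_full_block q : B <= q -> nth blank v q = nth blank w (q - B).
Proof. by move=> Bq; rewrite nth_cat size_map size_iota ltnNge Bq. Qed.

Lemma full_block_letter q : B <= q < n ->
  [/\ ~~ is_marker (nth blank v q), (nth blank v q).2 <= k,
      colour (nth blank v q) < a (k - (nth blank v q).2) & q + (nth blank v q).2 < n].
Proof.
case/andP => Bq qn; rewrite nth_full_block //; have qw : q - B < size w by lia.
have /and3P [? ? ?] := block_letter w_ok (mem_nth blank qw).
by split => //; have := run_end w_ok qw; lia.
Qed.

Lemma is_marker_full q : q < n -> is_marker (nth blank v q) = (q < B).
Proof.
move=> qn; case: ltnP => [qB | Bq]; first by rewrite nth_full_mark.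
by have [/negbTE] := full_block_letter (q := q) ltac:(lia).
Qed.

Lemma nth_full_ahead q d : B <= q < n -> d <= (nth blank v q).2 ->
  nth blank v (q + d) = (false, colour (nth blank v q), (nth blank v q).2 - d).
Proof.
move=> /andP [Bq qn]; rewrite !nth_full_block ?(leq_trans Bq (leq_addr _ _)) // => d_le.
rewrite (_ : q + d - B = q - B + d); last lia.
by rewrite (nth_run_ahead w_ok) //; lia.
Qed.

Lemma same_run i j : B <= i -> i < j < n ->
  (i + (nth blank v i).2 == j + (nth blank v j).2) = (j <= i + (nth blank v i).2).
Proof.
move=> Bi /andP [ij jn]; case: leqP => [j_le | j_gt]; last by apply/negbTE; lia.
have := nth_full_ahead (q := i) (d := j - i) ltac:(lia) ltac:(lia).
by rewrite subnKC ?(ltnW ij) // => ->; apply/eqP => /=; lia.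
Qed.

Local Notation tau := (labelling_of_word n v).

Lemma labelling_of_word_marker (i : 'I_n) : i < B -> tau i = mark i.+1.
Proof. by move=> iB; rewrite /labelling_of_word nth_full_mark. Qed.

Lemma labelling_of_word_block (i : 'I_n) : B <= i ->
  tau i = (false, colour (nth blank v i), i + (nth blank v i).2).
Proof. by move=> Bi; rewrite /labelling_of_word is_marker_full // ltnNge Bi. Qed.

Lemma is_marker_labelling_of_word (i : 'I_n) : is_marker (tau i) = (i < B).
Proof.
case: ltnP => [iB | Bi]; first by rewrite labelling_of_word_marker.
by rewrite labelling_of_word_block.
Qed.

Lemma block_rest_of_word (i : 'I_n) : B <= i -> #|block_rest tau i| = (nth blank v i).2.
Proof.
move=> Bi; have i_range : B <= i < n by rewrite Bi ltn_ord.
have [_ _ _ end_lt] := full_block_letter i_range.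
have -> : block_rest tau i = [set u : 'I_n | i < u < (i + (nth blank v i).2).+1].
  apply/setP => u; rewrite !inE ltnS; case: (ltnP i u) => //= iu.
  rewrite !labelling_of_word_block //=; last lia.
  by rewrite eq_sym same_run // iu ltn_ord.
by rewrite card_ord_range //; lia.
Qed.

Lemma labelling_of_word_ok : labelling k a tau.
Proof.
split.
- by move=> i j ij; rewrite !is_marker_labelling_of_word => /(ltn_trans ij).
- move=> i j ij; rewrite !is_marker_labelling_of_word => iB jB.
  by rewrite !labelling_of_word_marker.
- move=> i; rewrite is_marker_labelling_of_word => iB.
  by rewrite labelling_of_word_marker //=; lia.
- move=> i j ij; rewrite !is_marker_labelling_of_word -!leqNgt => Bi Bj.
  rewrite !labelling_of_word_block //=.
  case: (leqP j (i + (nth blank v i).2)) => [j_le | ]; last lia.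
  by have := same_run Bi (_ : i < j < n); rewrite ij ltn_ord j_le => /(_ isT) /eqP ->.
- move=> i j; rewrite !is_marker_labelling_of_word -!leqNgt => Bi Bj.
  rewrite !labelling_of_word_block //= => same_end.
  wlog ij : i j Bi Bj same_end / i <= j.
    move=> hyp; case: (leqP i j) => [ij | /ltnW ji]; first exact: hyp.
    exact/esym/(hyp j i Bj Bi (esym same_end) ji).
  have i_range : B <= i < n by rewrite Bi ltn_ord.
  have d_le : j - i <= (nth blank v i).2 by lia.
  by have := nth_full_ahead i_range d_le; rewrite subnKC // => ->.
- move=> i; rewrite is_marker_labelling_of_word -leqNgt => Bi.
  have i_range : B <= i < n by rewrite Bi ltn_ord.
  by rewrite block_rest_of_word //; have [] := full_block_letter i_range.
- move=> i; rewrite is_marker_labelling_of_word -leqNgt => Bi.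
  have i_range : B <= i < n by rewrite Bi ltn_ord.
  rewrite block_rest_of_word // labelling_of_word_block //=.
  by have [] := full_block_letter i_range.
Qed.

Lemma label_graph_labelling_of_word : label_graph tau = word_graph n v.
Proof.
apply: eq_ordgraph => i j ij; rewrite /label_adj /word_adj.
have flag (u : 'I_n) : is_marker (tau u) = is_marker (nth blank v u).
  by rewrite is_marker_labelling_of_word is_marker_full.
have col (u : 'I_n) : colour (tau u) = colour (nth blank v u).
  case: (ltnP u B) => uB; last by rewrite labelling_of_word_block.
  by rewrite (labelling_of_word_marker uB) nth_full_mark.
rewrite !flag !col; case: ifP => // /negbT; rewrite is_marker_full // -leqNgt => Bi.
have Bj : B <= j := leq_trans Bi (ltnW ij).
by rewrite !labelling_of_word_block //= same_run // ij ltn_ord.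
Qed.

Lemma word_adj_full_marker l q : 0 < l <= B -> B <= q < n ->
  word_adj v l.-1 q = (colour (nth blank v q) == l).
Proof.
move=> l_range q_range; have lB : l.-1 < B by lia.
rewrite /word_adj (nth_full_mark lB).
have [/negbTE -> _ _ _] := full_block_letter q_range.
have l_pos : 0 < l by lia.
by rewrite /= prednK // eq_sym.
Qed.

Lemma word_adj_full_run q q' : B <= q -> q < q' < n ->
  word_adj v q q' = (q' <= q + (nth blank v q).2).
Proof.
move=> Bq /andP [qq' q'n]; have qn := ltn_trans qq' q'n.
rewrite /word_adj !is_marker_full // (ltnNge q B) Bq /=.
by rewrite ltnNge (leq_trans Bq (ltnW qq')).
Qed.

Lemma full_colour_le q : B <= q < n -> colour (nth blank v q) <= B.
Proof.
move=> q_range; have [_ r_le col_lt _] := full_block_letter q_range.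
have := nondecreasing_upto a_mono (i := k - (nth blank v q).2) (j := k) ltac:(lia); lia.
Qed.
End FullWords.

Section FullWordsInjective.
Variables (k : nat) (a : nat -> nat) (n : nat) (w1 w2 : seq letter).
Hypothesis a_mono : forall i, i.+1 <= k -> a i <= a i.+1.
Hypotheses (w1_ok : block_word k a w1) (w2_ok : block_word k a w2) (B_le : (a k).-1 <= n).
Hypotheses (size_w1 : size w1 = n - (a k).-1) (size_w2 : size w2 = n - (a k).-1).
Local Notation B := (a k).-1.
Local Notation v1 := (all_marks B ++ w1).
Local Notation v2 := (all_marks B ++ w2).
Hypothesis same_graph : word_graph n v1 = word_graph n v2.

Lemma full_colour_eq q : B <= q < n -> colour (nth blank v1 q) = colour (nth blank v2 q).
Proof.
move=> q_range.
have col l : 0 < l <= B -> (colour (nth blank v1 q) == l) = (colour (nth blank v2 q) == l).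
  move=> l_range; rewrite -(word_adj_full_marker w1_ok B_le size_w1 l_range q_range).
  rewrite -(word_adj_full_marker w2_ok B_le size_w2 l_range q_range).
  by apply: word_adj_of_word_graph same_graph _ _; case/andP: q_range => Bq qn //; lia.
have le1 := full_colour_le a_mono w1_ok B_le size_w1 q_range.
have le2 := full_colour_le a_mono w2_ok B_le size_w2 q_range.
case: (posnP (colour (nth blank v1 q))) => [c1_0 | c1_pos].
  case: (posnP (colour (nth blank v2 q))) => [-> // | c2_pos].
  have := col _ (introT andP (conj c2_pos le2)); rewrite c1_0 eqxx => /eqP c2_0.
  by rewrite -c2_0 in c2_pos.
by apply/eqP; rewrite eq_sym -col ?c1_pos ?le1.
Qed.

Lemma full_tag_le q : B <= q < n -> (nth blank v1 q).2 <= (nth blank v2 q).2.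
Proof.
move=> /[dup] q_range /andP [Bq qn]; rewrite leqNgt; apply/negP => lt21.
have [_ _ _ end1] := full_block_letter w1_ok B_le size_w1 q_range.
have q_lt : q < q + (nth blank v1 q).2 by lia.
have q'_range : q < q + (nth blank v1 q).2 < n by rewrite q_lt end1.
have := word_adj_of_word_graph same_graph q_lt end1.
rewrite (word_adj_full_run w1_ok B_le size_w1 Bq q'_range).
by rewrite (word_adj_full_run w2_ok B_le size_w2 Bq q'_range) leqnn leq_add2l leqNgt lt21.
Qed.
End FullWordsInjective.

Lemma full_words_inj k a n w1 w2 :
  (forall i, i.+1 <= k -> a i <= a i.+1) -> (a k).-1 <= n ->
  block_word k a w1 -> size w1 = n - (a k).-1 ->
  block_word k a w2 -> size w2 = n - (a k).-1 ->
  word_graph n (all_marks (a k).-1 ++ w1) = word_graph n (all_marks (a k).-1 ++ w2) -> w1 = w2.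
Proof.
move=> a_mono B_le w1_ok size_w1 w2_ok size_w2 same_graph.
suff: all_marks (a k).-1 ++ w1 = all_marks (a k).-1 ++ w2.
  by move/eqP; rewrite eqseq_cat // => /andP [_ /eqP].
apply: (@eq_from_nth _ blank) => [|q]; first by rewrite !size_cat size_w1 size_w2.
rewrite size_cat size_map size_iota size_w1 => q_lt.
case: (ltnP q (a k).-1) => [qB | Bq]; first by rewrite !nth_full_mark.
have q_range : (a k).-1 <= q < n by rewrite Bq; lia.
have [b1 _ _ _] := full_block_letter w1_ok B_le size_w1 q_range.
have [b2 _ _ _] := full_block_letter w2_ok B_le size_w2 q_range.
have := full_colour_eq a_mono w1_ok w2_ok B_le size_w1 size_w2 same_graph q_range.
have := full_tag_le w1_ok w2_ok B_le size_w1 size_w2 same_graph q_range.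
have := full_tag_le w2_ok w1_ok B_le size_w2 size_w1 (esym same_graph) q_range.
move: b1 b2; case: (nth blank _ q) => [[[] ? ?]]; case: (nth blank _ q) => [[[] ? ?]] //=.
by move=> _ _ r21 r12 ->; congr (_, _, _); apply/eqP; rewrite eqn_leq r12 r21.
Qed.

Lemma card_Pn_le k a n : #|Pn (block_property k a) n| <= size (candidate_words k a n).
Proof.
rewrite -(size_map (@word_graph n)); apply: leq_trans (card_size _).
apply/subset_leq_card/subsetP => E.
rewrite inE => /andP [_ /block_propertyP [tau [tau_ok ->]]].
by rewrite (label_graph_word_of tau_ok); apply: map_f; apply: word_of_candidate tau_ok.
Qed.

Lemma card_Pn_ge k a n : (forall i, i.+1 <= k -> a i <= a i.+1) -> (a k).-1 <= n ->
  size (enum_block_words k a n (n - (a k).-1)) <= #|Pn (block_property k a) n|.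
Proof.
move=> a_mono B_le; set W := enum_block_words k a n (n - (a k).-1).
pose g w := word_graph n (all_marks (a k).-1 ++ w).
have W_ok w : w \in W -> block_word k a w /\ size w = n - (a k).-1.
  exact: (enum_block_words_sound a_mono (leq_subr (a k).-1 n)).
have g_inj : {in W &, injective g}.
  by move=> w1 w2 /W_ok [ok1 s1] /W_ok [ok2 s2]; apply: full_words_inj.
rewrite -(size_map g) -(card_uniqP _); last by rewrite map_inj_in_uniq ?enum_block_words_uniq.
apply/subset_leq_card/subsetP => _ /mapP [w /W_ok [w_ok size_w] ->].
rewrite inE ograph_ordgraph /=; apply/block_propertyP.
exists (labelling_of_word n (all_marks (a k).-1 ++ w)); split.
  exact: labelling_of_word_ok.
by rewrite label_graph_labelling_of_word.
Qed.

(** * Growth rate *)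

Local Open Scope R_scope.

Lemma continuity_poly_sum (a : nat -> nat) k :
  continuity (fun x => sum_f_R0 (fun i => INR (a i) * x ^ i) k).
Proof.
have mono i : continuity (fun x => INR (a i) * x ^ i).
  apply: continuity_scal; exact: derivable_continuous (derivable_pow i).
elim: k => [|k IH] //=; exact: continuity_plus.
Qed.

Lemma charpoly_root_ge1 k (a : nat -> nat) c : (0 < a k)%nat ->
  (forall x, charpoly_eq k a x -> x <= c) -> 1 <= c.
Proof.
move=> ak c_max.
pose f x := x ^ k.+1 - sum_f_R0 (fun i => INR (a i) * x ^ i) k.
have f_cont : continuity f.
  exact: continuity_minus (derivable_continuous _ (derivable_pow _)) (continuity_poly_sum a k).
pose S := sum_f_R0 (fun i => INR (a i)) k.
have S_ge1 : 1 <= S.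
  rewrite /S; apply: (Rle_trans _ (INR (a k))); first by apply: (le_INR 1); apply/leP.
  exact: (sum_f_R0_last_le k (fun i => pos_INR (a i))).
have f1 : f 1 <= 0.
  rewrite /f pow1 (sum_eq _ (fun i => INR (a i))) -/S; first lra.
  by move=> i _; rewrite pow1 Rmult_1_r.
have f_big : 0 <= f (1 + S).
  have y_pow_pos : 0 < (1 + S) ^ k by apply: pow_lt; lra.
  have : sum_f_R0 (fun i => INR (a i) * (1 + S) ^ i) k <= S * (1 + S) ^ k.
    rewrite Rmult_comm /S scal_sum; apply: sum_Rle => i ik.
    apply: Rmult_le_compat_l; first exact: pos_INR.
    by apply: Rle_pow; [rewrite -/S; lra | exact: ik].
  rewrite /f /=; nra.
have [z [[z_ge1 _] fz]] := IVT_cor f 1 (1 + S) f_cont ltac:(lra) ltac:(nra).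
by apply: Rle_trans z_ge1 (c_max z _); rewrite /charpoly_eq; rewrite /f in fz; lra.
Qed.

Lemma charpoly_eq1 k (a : nat -> nat) : (0 < a k)%nat -> charpoly_eq k a 1 -> a k = 1%nat.
Proof.
move=> ak; rewrite /charpoly_eq pow1 => sum1.
have last_le : INR (a k) * 1 ^ k <= sum_f_R0 (fun i => INR (a i) * 1 ^ i) k.
  apply: (sum_f_R0_last_le (g := fun i => INR (a i) * 1 ^ i)) => i.
  by apply: Rmult_le_pos; [exact: pos_INR | rewrite pow1; lra].
by move: last_le; rewrite -sum1 pow1 Rmult_1_r => /(INR_le _ 1) /leP; lia.
Qed.

Section CountingBounds.
Variables (k : nat) (a : nat -> nat) (c : R).
Hypotheses (c_ge1 : 1 <= c) (c_root : charpoly_eq k a c).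

Lemma card_Pn_upper n :
  INR #|Pn (block_property k a) n| <= INR (size (bounded_lists (a k).-1 (a k).-1)) * c ^ n.
Proof.
apply: Rle_trans (le_INR _ _ (elimT leP (card_Pn_le k a n))) _.
rewrite /candidate_words size_allpairs_dep sumnE big_map; apply: INR_sum_seq_le => l.
apply: Rle_trans (size_enum_block_words_le c_ge1 c_root (leq_subr (size l) n)) _.
by apply: Rle_pow => //; apply/leP; apply: leq_subr.
Qed.

Lemma card_Pn_lower n : (forall i, (i.+1 <= k)%nat -> (a i <= a i.+1)%nat) ->
  (0 < a k)%nat -> ((a k).-1 <= n)%nat ->
  c ^ n <= c ^ ((a k).-1 + k.+1) * INR #|Pn (block_property k a) n|.
Proof.
move=> a_mono ak B_le.
have size_le := le_INR _ _ (elimT leP (card_Pn_ge a_mono B_le)).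
have size_ge := size_enum_block_words_ge c_ge1 c_root ak (leq_subr (a k).-1 n).
rewrite -[in c ^ n](subnKC B_le) !pow_add Rmult_assoc.
apply: Rmult_le_compat_l; first by left; apply: pow_lt; lra.
apply: Rle_trans size_ge _; apply: Rmult_le_compat_l => //.
by left; apply: pow_lt; lra.
Qed.
End CountingBounds.

Theorem theorem31 (k : nat) (a : nat -> nat)
  (Hpos : forall i : nat, leq i k -> leq 1 (a i))
  (Hmono : forall i : nat, leq (S i) k -> leq (a i) (a (S i)))
  (c : R) (Hroot : charpoly_eq k a c)
  (Hlargest : forall x : R, charpoly_eq k a x -> x <= c) :
  exists P : oprop, hereditary P /\
    exists eps : nat -> R, Un_cv eps 0 /\
      exists N : nat, forall n : nat, leq N n ->
        INR #|Pn P n| = Rpower c ((1 + eps n) * INR n).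
Proof.
have ak_pos : (0 < a k)%nat := Hpos k (leqnn k).
have c_ge1 : 1 <= c := charpoly_root_ge1 ak_pos Hlargest.
exists (block_property k a); split; first exact: hereditary_block_property.
have upper := card_Pn_upper c_ge1 Hroot.
have lower := card_Pn_lower c_ge1 Hroot Hmono ak_pos.
have [c_eq1 | c_gt1] : c = 1 \/ 1 < c by lra.
  subst c; have ak1 := charpoly_eq1 ak_pos Hroot.
  exists (fun _ => 0); split.
    by move=> e e_pos; exists 0%nat => n _; rewrite /Rdist Rminus_0_r Rabs_R0.
  exists 0%nat => n _; rewrite /Rpower ln_1 Rmult_0_r exp_0.
  have := upper n; have := lower n; rewrite ak1 /= !pow1 => /(_ (leq0n n)); lra.
apply: Rpower_asymptotics c_gt1 _ (fun n B_le => conj (lower n B_le) (upper n)).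
by apply: pow_lt; lra.
Qed.
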